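(* Let $b_j\in\{-1,1\}$, $a_j\in\mathbb{R}^n$ for $j\in[q]$, $K\in\{0,\ldots,n-1\}$, $\gamma>0$, and let $x^*$ be a d-stationary point of $$\min_{x\in\mathbb{R}^n}\ \sum_{j\in[q]}\log\big(1+\exp(-b_ja_j^\top x)\big)+\gamma T_{K,n,1}(x).$$ If $\gamma>\sum_{j\in[q]}\|a_j\|_\infty$, then $T_{K,n,1}(x^* )=0$, i.e., $x^*$ has at most $K$ nonzero entries.
   Context: $T_{K,n,1}(x)$ is the sum of the $n-K$ smallest values among $|x_1|,\ldots,|x_n|$. A point is d-stationary if the directional derivative of the objective there is $\ge0$ in every direction. *)

From HB Require Import structures.
From mathcomp Require Import all_boot all_order all_algebra.
From mathcomp Require Import all_classical all_reals all_analysis.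
Set Implicit Arguments. Unset Strict Implicit. Unset Printing Implicit Defensive.
Import Order.TTheory GRing.Theory Num.Theory.
Import numFieldNormedType.Exports.
Local Open Scope classical_set_scope.
Local Open Scope ring_scope.

Section Defs.
Variable R : realType.

Definition Tk1 (n K : nat) (x : 'I_n -> R) : R :=
  \sum_(i < n - K) nth 0 (sort <=%R [seq `|x j| | j <- enum 'I_n]) i.

Definition dotv (n : nat) (a x : 'I_n -> R) : R := \sum_(i < n) a i * x i.

Definition norminf (n : nat) (a : 'I_n -> R) : R := \big[Num.max/0]_(i < n) `|a i|.

Definition logreg_obj (n q K : nat) (a : 'I_q -> 'I_n -> R) (b : 'I_q -> R)
  (gamma : R) (x : 'I_n -> R) : R :=
  \sum_(j < q) ln (1 + expR (- (b j * dotv (a j) x))) + gamma * Tk1 K x.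

Definition has_dir_deriv (n : nat) (f : ('I_n -> R) -> R) (x d : 'I_n -> R) (l : R) : Prop :=
  (fun t : R => (f (fun i => x i + t * d i) - f x) / t) @ 0^'+ --> l.

Definition d_stationary (n : nat) (f : ('I_n -> R) -> R) (x : 'I_n -> R) : Prop :=
  forall d : 'I_n -> R, exists l : R, has_dir_deriv f x d l /\ 0 <= l.

End Defs.

From HB Require Import structures.
From mathcomp Require Import all_boot all_order all_algebra.
From mathcomp Require Import all_classical all_reals all_analysis.
From mathcomp Require Import ring lra zify.
Set Implicit Arguments.
Unset Strict Implicit.
Unset Printing Implicit Defensive.

Import Order.TTheory GRing.Theory Num.Theory.
Local Open Scope ring_scope.

(* If x has more than K nonzero entries, the smallest nonzero |x_i| sits at a
   position p < n - K of the increasing rearrangement of |x|, so it is a summand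
   of T_{K,n,1}(x).  Moving x_i towards 0 by t <= |x_i| keeps that rearrangement
   sorted, hence lowers T_{K,n,1} by exactly t, whereas every logistic term,
   being 1-Lipschitz in its argument, grows by at most t ||a_j||_oo.  The
   directional derivative in this direction is therefore at most
   sum_j ||a_j||_oo - gamma < 0, contradicting d-stationarity. *)

Section SortedLists.
Variable R : realDomainType.
Implicit Types (s : seq R) (w : R).

Lemma count_eq0_sorted s : sorted <=%R s -> all (fun r => 0 <= r) s ->
  count_mem 0 s = find (predC1 0) s.
Proof.
move=> ss /allP s_ge0; set p := find _ s.
have le_ps : (p <= size s)%N by rewrite find_size.
rewrite -(cat_take_drop p s) count_cat.
have -> : count_mem 0 (take p s) = p.
  rewrite -[RHS](size_takel le_ps); apply/eqP; rewrite -all_count.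
  apply/(all_nthP 0) => k; rewrite (size_takel le_ps) => lt_kp.
  by rewrite nth_take //; apply/negbFE; exact: (before_find 0 lt_kp).
suff -> : count_mem 0 (drop p s) = 0%N by rewrite addn0.
apply/eqP; rewrite -leqn0 leqNgt -has_count.
apply/(has_nthP 0) => -[k]; rewrite size_drop nth_drop => lt_k /eqP sk0.
have lt_ps : (p < size s)%N by rewrite -subn_gt0 (leq_ltn_trans _ lt_k).
have sp_gt0 : 0 < nth 0 s p.
  rewrite lt_def s_ge0 ?mem_nth // andbT.
  by have := @nth_find _ 0 (predC1 0) s; rewrite has_find; apply.
have := sorted_leq_nth le_trans lexx 0 ss; move/(_ p (p + k)%N).
rewrite !inE lt_ps -ltn_subRL lt_k leq_addr sk0 => /(_ isT isT isT).
by rewrite leNgt sp_gt0.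
Qed.

Lemma sorted_set_nth s p w : sorted <=%R s -> (p < size s)%N ->
  (forall k, (k < p)%N -> nth 0 s k <= w) -> w <= nth 0 s p ->
  sorted <=%R (set_nth 0 s p w).
Proof.
move=> ss lt_ps le_w le_wp; apply/(sortedP 0) => i.
rewrite size_set_nth (maxn_idPr lt_ps) => lt_i; rewrite !nth_set_nth /=.
have [eq_ip|_] := eqVneq i p.
  subst i; rewrite (gtn_eqF (ltnSn p)).
  exact/(le_trans le_wp)/(sortedP 0 ss).
have [eq_ip|_] := eqVneq i.+1 p; first by apply: le_w; rewrite -eq_ip.
exact: (sortedP 0 ss).
Qed.

Lemma sum_set_nth s m p w : (p < m)%N ->
  \sum_(i < m) nth 0 (set_nth 0 s p w) i = \sum_(i < m) nth 0 s i + (w - nth 0 s p).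
Proof.
move=> lt_pm.
rewrite (bigD1 (Ordinal lt_pm)) //= [in RHS](bigD1 (Ordinal lt_pm)) //=.
rewrite nth_set_nth /= eqxx (eq_bigr (fun i : 'I_m => nth 0 s i)); first ring.
move=> i ne_ip; rewrite nth_set_nth /=.
by case: eqP => // eq_ip; move: ne_ip; rewrite -val_eqE /= eq_ip eqxx.
Qed.

Lemma map_nth_set_nth (L : seq R) (Is : seq nat) p w : uniq Is -> (p < size Is)%N ->
  set_nth 0 [seq nth 0 L i | i <- Is] p w =
  [seq nth 0 (set_nth 0 L (nth 0%N Is p) w) i | i <- Is].
Proof.
move=> uI lt_pI; apply: (@eq_from_nth _ 0).
  by rewrite size_set_nth !size_map; apply/maxn_idPr.
move=> k; rewrite size_set_nth size_map (maxn_idPr lt_pI) => lt_kI.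
by rewrite !nth_set_nth /= !(nth_map 0%N) // nth_set_nth /= nth_uniq.
Qed.

Lemma sort_set_nth (L : seq R) p : (p < size L)%N ->
  exists j, [/\ (j < size L)%N, nth 0 L j = nth 0 (sort <=%R L) p &
    forall w, (forall k, (k < p)%N -> nth 0 (sort <=%R L) k <= w) ->
      w <= nth 0 (sort <=%R L) p ->
    sort <=%R (set_nth 0 L j w) = set_nth 0 (sort <=%R L) p w].
Proof.
move=> lt_pL; set s := sort _ L.
have /(perm_iotaP 0) [Is pIs sE] : perm_eq s L by rewrite perm_sort.
have uI : uniq Is by rewrite (perm_uniq pIs) iota_uniq.
have szI : size Is = size L by rewrite (perm_size pIs) size_iota.
have lt_pI : (p < size Is)%N by rewrite szI.
have lt_jL : (nth 0%N Is p < size L)%N.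
  by have := mem_nth 0%N lt_pI; rewrite (perm_mem pIs) mem_iota.
exists (nth 0%N Is p); split => //; first by rewrite sE (nth_map 0%N).
move=> w le_w le_wp; apply: (sorted_eq le_trans le_anti).
- exact: sort_sorted le_total _.
- by apply: sorted_set_nth => //; rewrite ?sort_sorted ?size_sort //; exact: le_total.
rewrite perm_sort sE map_nth_set_nth // perm_sym; apply/(perm_iotaP 0).
by exists Is; rewrite // size_set_nth (maxn_idPr lt_jL).
Qed.

End SortedLists.

Lemma map_enum_ord_set_nth (T : Type) (x0 : T) n (f g : 'I_n -> T) (i0 : 'I_n) :
  (forall i, i != i0 -> g i = f i) ->
  [seq g i | i <- enum 'I_n] = set_nth x0 [seq f i | i <- enum 'I_n] i0 (g i0).
Proof.
move=> gf; apply: (@eq_from_nth _ x0).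
  by rewrite size_set_nth (size_map g) (size_map f) size_enum_ord; apply/esym/maxn_idPr.
move=> k; rewrite size_map size_enum_ord => lt_kn.
have lt_k_enum : (k < size (enum 'I_n))%N by rewrite size_enum_ord.
rewrite nth_set_nth /= !(nth_map i0 x0 _ lt_k_enum) (nth_ord_enum i0 (Ordinal lt_kn)).
case: eqP => [eq_ki|/eqP ne_ki]; first by congr g; exact: val_inj.
by apply: gf; rewrite -val_eqE.
Qed.

Lemma count_enum (T : finType) (P : pred T) : count P (enum T) = #|P|.
Proof. by rewrite cardE -size_filter enumT. Qed.

Section SortedAbs.
Variable R : realDomainType.

Definition sorted_abs n (x : 'I_n -> R) : seq R := sort <=%R [seq `|x j| | j <- enum 'I_n].

Variables (n : nat) (x : 'I_n -> R).

Lemma size_sorted_abs : size (sorted_abs x) = n.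
Proof. by rewrite size_sort size_map size_enum_ord. Qed.

Lemma sorted_abs_sorted : sorted <=%R (sorted_abs x).
Proof. exact: sort_sorted le_total _. Qed.

Lemma sorted_abs_ge0 : all (fun r => 0 <= r) (sorted_abs x).
Proof. by rewrite all_sort all_map; apply/allP => j _ /=. Qed.

Lemma card_support_sorted_abs : #|[set i | x i != 0]| = count (predC1 0) (sorted_abs x).
Proof.
rewrite count_sort count_map cardsE -count_enum; apply: eq_count => i /=.
by rewrite normr_eq0.
Qed.

End SortedAbs.

Lemma normr_subr_sg (R : realDomainType) (r t : R) :
  0 <= t <= `|r| -> `|r - t * Num.sg r| = `|r| - t.
Proof.
case/andP=> t_ge0 le_tr; have [r0|nz_r] := eqVneq r 0.
  by move: le_tr; rewrite r0 sgr0 mulr0 subr0 normr0 => le_t0; lra.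
rewrite {1}[r]numEsg (mulrC t) -mulrBr normrM normr_sg nz_r mul1r ger0_norm //.
by rewrite subr_ge0.
Qed.

Section Tk1.
Variables (R : realType) (n K : nat).
Implicit Types x : 'I_n -> R.

Lemma Tk1E x : Tk1 K x = \sum_(i < n - K) nth 0 (sorted_abs x) i.
Proof. by []. Qed.

Lemma Tk1_shrink x : (find (predC1 0%R) (sorted_abs x) < n - K)%N ->
  exists i0, x i0 != 0 /\ forall t, 0 < t <= `|x i0| ->
    Tk1 K (fun i => x i + t * (if i == i0 then - Num.sg (x i0) else 0)) = Tk1 K x - t.
Proof.
rewrite /sorted_abs; set L := [seq _ | j <- _]; set s := sort _ L; set p := find _ s.
move=> lt_p; have sizeL : size L = n by rewrite size_map size_enum_ord.
have lt_pn : (p < n)%N by apply: leq_trans lt_p (leq_subr _ _).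
have [|j [lt_jn Lj shrink]] := @sort_set_nth _ L p; first by rewrite sizeL.
rewrite sizeL in lt_jn; set i0 := Ordinal lt_jn.
have x_sp : `|x i0| = nth 0 s p.
  by rewrite -Lj (nth_map i0) ?size_enum_ord // (nth_ord_enum i0 i0).
have sp_neq0 : nth 0 s p != 0.
  by have := @nth_find _ 0 (predC1 0) s; rewrite has_find size_sort sizeL; apply.
exists i0; split; first by rewrite -normr_eq0 x_sp.
move=> t /andP[t_gt0 le_tx].
rewrite /Tk1 (@map_enum_ord_set_nth _ 0 _ (fun j => `|x j|) _ i0); last first.
  by move=> i /negbTE ->; rewrite mulr0 addr0.
rewrite eqxx mulrN normr_subr_sg ?le_tx ?ltW // -/L x_sp shrink.
- by rewrite sum_set_nth //; lra.
- move=> k /(before_find 0) /negbFE /eqP ->.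
  by rewrite subr_ge0 -x_sp.
- by rewrite gerBl ltW.
Qed.

Lemma Tk1_eq0_card_support x : (n - K <= find (predC1 0%R) (sorted_abs x))%N ->
  Tk1 K x = 0 /\ (#|[set i | x i != 0%R]| <= K)%N.
Proof.
move=> le_p; split.
  rewrite Tk1E; apply: big1 => i _; apply/eqP/negbFE.
  exact: (before_find 0 (leq_trans (ltn_ord i) le_p)).
have := count_predC (pred1 0) (sorted_abs x).
rewrite count_eq0_sorted ?sorted_abs_sorted ?sorted_abs_ge0 // size_sorted_abs.
rewrite card_support_sorted_abs (eq_count (a2 := predC (pred1 0))) //.
move: le_p; set p := find _ _; lia.
Qed.

End Tk1.

Section Analysis.
Variable R : realType.

Lemma ln1DexpR_sub_le (u v : R) : ln (1 + expR u) - ln (1 + expR v) <= `|u - v|.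
Proof.
have pos w : 0 < 1 + expR w by rewrite ltr_wpDr // expR_gt0.
have [le_uv|lt_vu] := leP u v.
  apply: le_trans (normr_ge0 _); rewrite subr_le0 ler_ln ?posrE //.
  by rewrite lerD2l ler_expR.
have le_exp : 1 + expR u <= expR (u - v) * (1 + expR v).
  rewrite mulrDr mulr1 -expRD subrK lerD2r.
  by apply: le_trans (expR_ge1Dx _); rewrite lerDl subr_ge0 ltW.
rewrite gtr0_norm ?subr_gt0 // lerBlDr -[u - v]expRK -lnM ?posrE ?expR_gt0 //.
by rewrite ler_ln ?posrE ?mulr_gt0 ?expR_gt0.
Qed.

Lemma dotv_shift n (a x d : 'I_n -> R) (i0 : 'I_n) t :
  (forall i, i != i0 -> d i = 0) ->
  dotv a (fun i => x i + t * d i) = dotv a x + t * (a i0 * d i0).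
Proof.
move=> d_supp; rewrite /dotv (bigD1 i0) // [in X in _ = X + _](bigD1 i0) //=.
rewrite (eq_bigr (fun i => a i * x i)) => [|i /d_supp ->]; last by rewrite mulr0 addr0.
ring.
Qed.

Definition logistic_loss n q (a : 'I_q -> 'I_n -> R) (b : 'I_q -> R) (x : 'I_n -> R) : R :=
  \sum_(j < q) ln (1 + expR (- (b j * dotv (a j) x))).

Lemma logistic_loss_shift n q (a : 'I_q -> 'I_n -> R) b (x d : 'I_n -> R) i0 t :
  (forall j, `|b j| = 1) -> (forall i, i != i0 -> d i = 0) -> `|d i0| = 1 -> 0 <= t ->
  logistic_loss a b (fun i => x i + t * d i) - logistic_loss a b x
    <= t * \sum_(j < q) norminf (a j).
Proof.
move=> b1 d_supp d1 t_ge0; rewrite -sumrB mulr_sumr; apply: ler_sum => j _.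
apply: le_trans (ln1DexpR_sub_le _ _) _.
rewrite (dotv_shift (a j) x t d_supp) mulrDr opprD addrAC subrr add0r normrN !normrM.
by rewrite b1 d1 ger0_norm // mul1r mulr1 ler_wpM2l //; exact: le_bigmax.
Qed.

Lemma dir_deriv_le n (f : ('I_n -> R) -> R) x d l (e M : R) :
  has_dir_deriv f x d l -> 0 < e ->
  (forall t, 0 < t < e -> (f (fun i => x i + t * d i) - f x) / t <= M) -> l <= M.
Proof.
move=> fl e_gt0 le_M; apply: (cvgr_to_le fl).
by apply: filterS2 (nbhs_right_gt 0) (nbhs_right_lt e_gt0) => t *; apply: le_M; apply/andP.
Qed.

Lemma d_stationary_find_sorted_abs n K (f : ('I_n -> R) -> R) (gamma S : R) x :
  d_stationary (fun y => f y + gamma * Tk1 K y) x ->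
  (forall d i0 t, (forall i, i != i0 -> d i = 0) -> `|d i0| = 1 -> 0 <= t ->
     f (fun i => x i + t * d i) - f x <= t * S) ->
  S < gamma -> (n - K <= find (predC1 0%R) (sorted_abs x))%N.
Proof.
move=> stat f_shift lt_S; rewrite leqNgt; apply/negP.
case/Tk1_shrink => i0 [nz_i0 T_shrink].
pose d i := if i == i0 then - Num.sg (x i0) else 0.
have d_supp i : i != i0 -> d i = 0 by rewrite /d => /negbTE ->.
have d_i0 : `|d i0| = 1 by rewrite /d eqxx normrN normr_sg nz_i0.
have [l [/dir_deriv_le le_l l_ge0]] := stat d.
suff : l <= S - gamma by lra.
apply: (le_l `|x i0|); first by rewrite normr_gt0.
move=> t /andP[t_gt0 lt_tx]; rewrite ler_pdivrMr // T_shrink; last by rewrite t_gt0 ltW.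
have := f_shift d i0 t d_supp d_i0 (ltW t_gt0); lra.
Qed.

End Analysis.

Theorem mainTheorem8 (R : realType) (n q K : nat)
  (a : 'I_q -> 'I_n -> R) (b : 'I_q -> R) (gamma : R) (xs : 'I_n -> R) :
  (forall j, b j = 1 \/ b j = -1) ->
  (K < n)%N ->
  0 < gamma ->
  d_stationary (logreg_obj K a b gamma) xs ->
  gamma > \sum_(j < q) norminf (a j) ->
  Tk1 K xs = 0 /\ (#|[set i | xs i != 0%R]| <= K)%N.
Proof.
move=> b_sign _ _ stat gamma_gt; apply: Tk1_eq0_card_support.
apply: (d_stationary_find_sorted_abs (f := logistic_loss a b) stat _ gamma_gt).
move=> d i0 t; apply: logistic_loss_shift => j.
by case: (b_sign j) => ->; rewrite ?normrN normr1.
Qed.
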